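(* Let $G$ be a finite simple $(P_2\cup P_1)$-free graph. Then: (1) if $S\subseteq V(G)$ is a cutset of $G$, then every component of $G-S$ consists of a single vertex; (2) if $S$ is a minimal cutset of $G$ (no proper subset of $S$ is a cutset), then every vertex of $S$ is adjacent to every vertex of $V(G)\setminus S$, i.e., the bipartite graph $G[S,V(G)\setminus S]$ is complete bipartite; (3) $\kappa(G)=\delta(G)$; (4) $\delta(G)\ge |V(G)|-\alpha(G)$.
   Context: $P_2\cup P_1$ is the graph on three vertices consisting of one edge and one isolated vertex; $G$ is $(P_2\cup P_1)$-free if it has no induced subgraph isomorphic to $P_2\cup P_1$. A cutset of $G$ is a set $S\subseteq V(G)$ such that $G-S$ has at least two components. $G[S,V(G)\setminus S]$ denotes the bipartite graph with parts $S$ and $V(G)\setminus S$ whose edges are the edges of $G$ between these parts. $\delta(G)$ is the minimum degree, $\alpha(G)$ the independence number, and $\kappa(G)$ the connectivity: the minimum size of a cutset if $G$ is noncomplete, and $|V(G)|-1$ if $G$ is complete. *)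

From mathcomp Require Import all_boot all_order.
Set Implicit Arguments. Unset Strict Implicit. Unset Printing Implicit Defensive.

Section Graphs.
Variable T : finType.
Variable e : rel T.

Definition simple_graph : Prop := symmetric e /\ irreflexive e.

(* (P2 u P1)-free: no three distinct vertices x,y,z inducing one edge xy
   and an isolated vertex z. *)
Definition P2P1_free : Prop :=
  forall x y z : T, x != z -> y != z -> e x y -> ~~ e x z -> ~~ e y z -> False.

Definition del_rel (S : {set T}) : rel T :=
  [rel x y | [&& e x y, x \notin S & y \notin S]].

Definition same_comp (S : {set T}) (x y : T) : bool :=
  connect (del_rel S) x y.

Definition cutset (S : {set T}) : bool :=
  [exists x, exists y, [&& x \notin S, y \notin S & ~~ same_comp S x y]].

Definition minimal_cutset (S : {set T}) : bool :=
  cutset S && [forall S' : {set T}, (S' \proper S) ==> ~~ cutset S'].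

Definition complete_graph : bool :=
  [forall x, forall y, (x != y) ==> e x y].

Definition kappa : nat :=
  if complete_graph then #|T| - 1
  else \big[minn/#|T|]_(S : {set T} | cutset S) #|S|.

Definition degree (x : T) : nat := #|[set y | e x y]|.

(* minimum degree (the default #|T| is only reached when T is empty) *)
Definition delta : nat := \big[minn/#|T|]_(x : T) degree x.

Definition independent (A : {set T}) : bool :=
  [forall x in A, forall y in A, ~~ e x y].

Definition alpha : nat := \max_(A : {set T} | independent A) #|A|.

End Graphs.

(* If S is a cutset, uw an edge of G - S and z a vertex of G - S outside the
   component of u, then z is adjacent to neither u nor w, so u, w, z induce
   P2 u P1.  Hence G - S is edgeless for every cutset S, which is (1).  For (2),
   a vertex x of a minimal cutset S not adjacent to y outside S would leave y
   isolated in G - (S - x), which is therefore still disconnected.  Edgelessness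
   also puts N(a) inside S for every a outside S, so delta <= kappa; conversely
   in a noncomplete graph the neighbourhood of a vertex of minimum degree is a
   cutset.  Finally, by (P2 u P1)-freeness the non-neighbours of any vertex x
   form an independent set of size n - deg x. *)

From mathcomp Require Import all_boot all_order zify.

Set Implicit Arguments. Unset Strict Implicit. Unset Printing Implicit Defensive.

Import Order.TTheory.

Lemma connect_from_isolated (T : finType) (r : rel T) x y :
  (forall z, ~~ r x z) -> connect r x y -> x = y.
Proof.
move=> isol_x /connectP [[|z p] /= r_p ->] //.
by case/andP: r_p; rewrite (negbTE (isol_x z)).
Qed.

Section Graph.
Variables (T : finType) (e : rel T).

Lemma not_complete_graph_nonadj :
  ~~ complete_graph e -> exists u v, u != v /\ ~~ e u v.
Proof.
case/forallPn=> u /forallPn [v]; rewrite negb_imply => /andP [uv nuv].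
by exists u, v.
Qed.

Lemma cutset_other_vertex S y :
  cutset e S -> y \notin S -> exists2 c, c \notin S & c != y.
Proof.
case/existsP=> a /existsP [b /and3P [aS bS nab]] yS.
case: (eqVneq a y) => [ay|]; last by exists a.
exists b => //; apply: contraNneq nab => ->; rewrite ay; exact: connect0.
Qed.

Lemma delta_le_degree x : delta e <= degree e x.
Proof. exact: (bigmin_le_cond (T:=nat)). Qed.

Lemma delta_degree (j : T) : exists x, delta e = degree e x.
Proof.
have [x _ delta_x] := eq_bigmin (T:=nat) j predT (degree e) isT (fun x _ => max_card _).
by exists x.
Qed.

Hypotheses (e_sym : symmetric e) (e_irr : irreflexive e).

Lemma del_rel_connect_sym S : connect_sym (del_rel e S).
Proof.
apply: sym_connect_sym => x y; rewrite /del_rel /= e_sym.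
by congr (_ && _); rewrite andbC.
Qed.

Lemma cutset_separated S u :
  cutset e S -> u \notin S -> exists2 z, z \notin S & ~~ same_comp e S u z.
Proof.
case/existsP=> a /existsP [b /and3P [aS bS nab]] uS.
case ua: (same_comp e S u a); last by exists a; rewrite ?ua.
exists b => //; apply: contraNN nab => ub.
by apply: connect_trans ub; rewrite del_rel_connect_sym.
Qed.

Lemma cutset_neighbours x z :
  z \notin x |: [set y | e x y] -> cutset e [set y | e x y].
Proof.
rewrite !inE negb_or => /andP [zx nxz].
apply/existsP; exists x; apply/existsP; exists z.
have isol_x w : ~~ del_rel e [set y | e x y] x w.
  by rewrite /del_rel /= !inE; case: (e x w); rewrite ?andbF.
by rewrite !inE e_irr nxz; apply: contra zx => /(connect_from_isolated isol_x) ->.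
Qed.

Lemma degree_complete_graph x : complete_graph e -> degree e x = #|T| - 1.
Proof.
move=> /forallP /(_ x) /forallP complete_x.
rewrite /degree subn1 -(cardsC1 x); apply: eq_card => y; rewrite !inE.
by case: (eqVneq x y) => [<-|/(implyP (complete_x y))->]; rewrite ?e_irr.
Qed.

Lemma degree_nonadj u v : u != v -> ~~ e u v -> degree e u <= #|T| - 2.
Proof.
move=> uv nuv.
have <- : #|~: [set u; v]| = #|T| - 2 by rewrite cardsCs setCK cards2 uv.
apply: subset_leq_card.
apply/subsetP => y; rewrite !inE negb_or => uy.
by apply/andP; split; apply: contraTneq uy => ->; rewrite ?e_irr.
Qed.

Lemma kappa_complete_graph : complete_graph e -> kappa e = delta e.
Proof.
move=> complete_e; rewrite /kappa complete_e.
case: (pickP T) => [j _|T0].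
  by have [x ->] := delta_degree j; rewrite degree_complete_graph.
have card_T0 : #|T| = 0 by apply: eq_card0.
rewrite card_T0 sub0n; apply/esym/eqP; rewrite -leqn0 -card_T0.
exact: (bigmin_le_id (T:=nat)).
Qed.

Lemma kappa_le_degree x :
  ~~ complete_graph e -> degree e x + 2 <= #|T| -> kappa e <= degree e x.
Proof.
move=> ncomplete_e small_x; rewrite /kappa (negbTE ncomplete_e).
have [z z_out] : exists z, z \in ~: (x |: [set y | e x y]).
  apply/card_gt0P; rewrite cardsCs setCK cardsU1.
  by move: small_x; rewrite /degree; case: (_ \notin _) => /=; lia.
rewrite inE in z_out.
apply: (bigmin_le_cond (T:=nat)); exact: cutset_neighbours z_out.
Qed.

Section P2P1Free.
Hypothesis e_free : P2P1_free e.

Lemma cutset_no_edge S u w : cutset e S -> u \notin S -> w \notin S -> ~~ e u w.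
Proof.
move=> cut_S uS wS; apply/negP => uw.
have [z zS nuz] := cutset_separated cut_S uS.
have comp_uw : same_comp e S u w by apply: connect1; rewrite /del_rel /= uw uS wS.
apply: (e_free (x:=u) (y:=w) (z:=z)) => //.
- by apply: contraNneq nuz => <-; exact: connect0.
- by apply: contraNneq nuz => <-.
- by apply: contra nuz => uz; apply: connect1; rewrite /del_rel /= uz uS zS.
- apply: contra nuz => wz; apply: connect_trans comp_uw _.
  by apply: connect1; rewrite /del_rel /= wz wS zS.
Qed.

Lemma cutset_component_singleton S x y :
  cutset e S -> x \notin S -> y \notin S -> same_comp e S x y -> x = y.
Proof.
move=> cut_S xS _; apply: connect_from_isolated => w; rewrite /del_rel /= xS.
by case wS: (w \in S); rewrite ?andbF // (negbTE (cutset_no_edge cut_S xS (negbT wS))).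
Qed.

Lemma minimal_cutset_complete_bipartite S x y :
  minimal_cutset e S -> x \in S -> y \notin S -> e x y.
Proof.
case/andP=> cut_S /forallP minimal_S xS yS; apply/negPn/negP => nxy.
have [c cS cy] := cutset_other_vertex cut_S yS.
have comp_yc : same_comp e (S :\ x) y c.
  move: (minimal_S (S :\ x)); rewrite properD1 //= => /negP; apply: contra_notT.
  move=> nyc; apply/existsP; exists y; apply/existsP; exists c.
  by rewrite !in_setD1 (negbTE yS) (negbTE cS) !andbF.
have [[|w p] /= path_yc last_c] := connectP comp_yc; first by rewrite last_c eqxx in cy.
case/andP: path_yc => /and3P [yw _]; rewrite in_setD1 negb_and negbK => /orP [/eqP wx|wS] _.
  by rewrite -wx e_sym yw in nxy.
by rewrite (negbTE (cutset_no_edge cut_S yS wS)) in yw.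
Qed.

Lemma delta_le_kappa : delta e <= kappa e.
Proof.
case: (boolP (complete_graph e)) => [/kappa_complete_graph->//|ncomplete_e].
rewrite /kappa (negbTE ncomplete_e).
apply: (le_bigmin (T:=nat)) => [|S cut_S]; first exact: (bigmin_le_id (T:=nat)).
case/existsP: (cut_S) => a /existsP [_ /and3P [aS _ _]].
apply: leq_trans (delta_le_degree a) (subset_leq_card _).
apply/subsetP => y; rewrite inE; apply: contraTT => yS.
exact: cutset_no_edge cut_S aS yS.
Qed.

Lemma kappa_eq_delta : kappa e = delta e.
Proof.
case: (boolP (complete_graph e)) => [|ncomplete_e]; first exact: kappa_complete_graph.
apply/eqP; rewrite eqn_leq delta_le_kappa andbT.
have [u [v [uv nuv]]] := not_complete_graph_nonadj ncomplete_e.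
have [x delta_x] := delta_degree u.
rewrite delta_x; apply: kappa_le_degree ncomplete_e _.
have := leq_trans (delta_le_degree u) (degree_nonadj uv nuv).
have := max_card [set u; v]; rewrite cards2 uv delta_x; lia.
Qed.

Lemma nonneighbours_independent x : independent e [set y | ~~ e x y].
Proof.
apply/forallP => y; apply/implyP; rewrite inE => nxy.
apply/forallP => z; apply/implyP; rewrite inE => nxz.
apply/negP => yz.
case: (eqVneq y x) => [yx|yx]; first by rewrite -yx yz in nxz.
case: (eqVneq z x) => [zx|zx]; first by rewrite -zx e_sym yz in nxy.
by apply: (e_free yx zx yz); rewrite e_sym.
Qed.

Lemma order_sub_alpha_le_delta : #|T| - alpha e <= delta e.
Proof.
apply: (le_bigmin (T:=nat)) => [|x _]; first exact: leq_subr.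
have alpha_ge : #|[set y | ~~ e x y]| <= alpha e.
  exact: leq_bigmax_cond (nonneighbours_independent x).
have card_split : degree e x + #|[set y | ~~ e x y]| = #|T|.
  by rewrite -(cardsC [set y | e x y]); congr (_ + _); apply: eq_card => y; rewrite !inE.
lia.
Qed.

End P2P1Free.
End Graph.

Theorem lemma2p6 (T : finType) (e : rel T) :
  simple_graph e -> P2P1_free e ->
  (forall S : {set T}, cutset e S ->
     forall x y, x \notin S -> y \notin S -> same_comp e S x y -> x = y) /\
  (forall S : {set T}, minimal_cutset e S ->
     forall x y, x \in S -> y \notin S -> e x y) /\
  kappa e = delta e /\
  #|T| - alpha e <= delta e.
Proof.
move=> [e_sym e_irr] e_free; split; [|split; [|split]].
- by move=> S cut_S x y; apply: cutset_component_singleton.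
- by move=> S minimal_S x y; apply: minimal_cutset_complete_bipartite.
- exact: kappa_eq_delta.
- exact: order_sub_alpha_le_delta.
Qed.
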